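(* Let $\epsilon>0$ and let $u^1,u^2$ be smooth functions on $[0,1]^2$; denote also by $u^1,u^2$ their restrictions to the grid $(x_i,y_j)=(i\Delta x,j\Delta y)$, $i=0,\dots,N-1$, $j=0,\dots,M-1$, $(N-1)\Delta x=(M-1)\Delta y=1$. Let $D_x=P_x^{-1}Q_x$, $D_y=P_y^{-1}Q_y$ be summation-by-parts operators with $P_x=\Delta x\,\mathrm{diag}(p^x_0,\dots,p^x_{N-1})$, $P_y=\Delta y\,\mathrm{diag}(p^y_0,\dots,p^y_{M-1})$, positive entries, $Q_x+Q_x^T=R_N-L_N$, $Q_y+Q_y^T=R_M-L_M$, and $p:=p^x_0=p^x_{N-1}=p^y_0=p^y_{M-1}$; assume moreover that these operators satisfy, for every smooth $\bar u$ with grid restriction $u$ and every grid function $w$, $\|D_x(u\circ w)-u\circ D_xw\|_{P_x}\le C_0\|\partial_x\bar u\|_{L^\infty}\|w\|_{P_x}$ (and analogously in $y$) with $C_0$ independent of the grid. Let $\mathbf V(t)=(V^1(t),V^2(t))$ solve the semi-discrete scheme $$ \mathbf V_t+u^1\circ\mathfrak{d}_x\mathbf V+u^2\circ\mathfrak{d}_y\mathbf V-C\mathbf V+\epsilon\,\mathfrak{curl}^2(\mathbf V)=\mathcal B\mathbf V,\qquad t>0, $$ (i.e. the scheme with homogeneous Dirichlet data $\mathbf g=0$), where $C=\begin{pmatrix}-\mathfrak{d}_yu^2 & \mathfrak{d}_yu^1\\ \mathfrak{d}_xu^2 & -\mathfrak{d}_xu^1\end{pmatrix}$ (entries acting by componentwise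 multiplication) and $$\mathcal B=(P_x^{-1}\otimes I_M)(\Sigma_{\mathcal L}\mathcal L+\Sigma_{\mathcal R}\mathcal R)+(I_N\otimes P_y^{-1})(\Sigma_{\mathcal D}\mathcal D+\Sigma_{\mathcal U}\mathcal U),$$ with diagonal penalty matrices $\Sigma_{\mathcal K}=\Sigma'_{\mathcal K}+\epsilon\Sigma''_{\mathcal K}$ ($\mathcal K\in\{\mathcal L,\mathcal R,\mathcal D,\mathcal U\}$), whose diagonal entries are indexed like grid functions, $(\sigma_{\mathcal K})_{i,j}$. Suppose the penalty parameters satisfy $$(\sigma'_{\mathcal R})_{N-1,j}\le \tfrac{u^{1,-}(1,y_j)}{2},\quad (\sigma'_{\mathcal L})_{0,j}\le-\tfrac{u^{1,+}(0,y_j)}{2},\quad (\sigma'_{\mathcal U})_{i,M-1}\le\tfrac{u^{2,-}(x_i,1)}{2},\quad (\sigma'_{\mathcal D})_{i,0}\le-\tfrac{u^{2,+}(x_i,0)}{2},$$ $$\sigma''_{\mathcal R}\le-\tfrac{1}{2p\Delta x},\quad \sigma''_{\mathcal L}\le-\tfrac{1}{2p\Delta x},\quad \sigma''_{\mathcal U}\le-\tfrac{1}{2p\Delta y},\quad \sigma''_{\mathcal D}\le-\tfrac{1}{2p\Delta y},$$ and all other entries are $0$. Then $$\|\mathbf V(t)\|_{\mathbf P}^2\le e^{ct}\|\mathbf V(0)\|_{\mathbf P}^2,$$ where $c$ is a constant depending on $u^1,u^2$ and their derivative approximations but not on $N$ or $M$.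
   Context: $R_n=\mathrm{diag}(0,\dots,0,1)$, $L_n=\mathrm{diag}(1,0,\dots,0)$ ($n\times n$), $I_n$ identity, $\otimes$ Kronecker product. $\mathfrak{d}_x=D_x\otimes I_M$, $\mathfrak{d}_y=I_N\otimes D_y$, $\mathbf P=P_x\otimes P_y$, $\mathcal R=R_N\otimes I_M$, $\mathcal L=L_N\otimes I_M$, $\mathcal U=I_N\otimes R_M$, $\mathcal D=I_N\otimes L_M$. Grid functions are ordered as $(w_{0,0},w_{0,1},\dots,w_{0,M-1},w_{1,0},\dots,w_{N-1,M-1})^T$; $(u\circ w)_k=u_kw_k$; $\|w\|_{P_x}=(w^TP_xw)^{1/2}$. $(v,w)_{\mathbf P}=v^T\mathbf Pw$, and for vector grid functions $(\mathbf V,\mathbf W)_{\mathbf P}=(V^1,W^1)_{\mathbf P}+(V^2,W^2)_{\mathbf P}$, $\|\mathbf V\|_{\mathbf P}=(\mathbf V,\mathbf V)_{\mathbf P}^{1/2}$; operators and $\mathcal B$ act on $\mathbf V$ componentwise. $\mathfrak{curl}^2(\mathbf V)=(-\mathfrak{d}_{yy}V^1+\mathfrak{d}_{xy}V^2,\ \mathfrak{d}_{xy}V^1-\mathfrak{d}_{xx}V^2)$ with $\mathfrak{d}_{xy}=\mathfrak{d}_x\mathfrak{d}_y$, etc. $u^{l,+}=\max(u^l,0)$, $u^{l,-}=\min(u^l,0)$. The $\Sigma''$ conditions are stated for scalar (constant) values $\sigma''_{\mathcal K}$ of the relevant boundary entries. *)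

From HB Require Import structures.
From mathcomp Require Import all_boot all_order all_algebra.
From mathcomp Require Import all_classical all_reals all_analysis.
Set Implicit Arguments. Unset Strict Implicit. Unset Printing Implicit Defensive.
Import Order.TTheory GRing.Theory Num.Theory.
Import numFieldNormedType.Exports.
Local Open Scope ring_scope.
Local Open Scope classical_set_scope.

Definition smooth1 {R : realType} (f : R -> R) : Prop :=
  forall (k : nat) (x : R), derivable (derive1n k f) x 1.

Definition pd {R : realType} (b : bool) (f : R -> R -> R) : R -> R -> R :=
  if b then (fun x y => derive1 (fun x' => f x' y) x)
  else (fun x y => derive1 (f x) y).

Definition pds {R : realType} (s : seq bool) (f : R -> R -> R) : R -> R -> R :=
  foldr (@pd R) f s.

Definition smooth2 {R : realType} (f : R -> R -> R) : Prop :=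
  forall s : seq bool,
    (forall x y : R, derivable (fun x' => pds s f x' y) x 1 /\
                     derivable (pds s f x) y 1) /\
    continuous (fun q : R * R => pds s f q.1 q.2).

Definition supnorm01 {R : realType} (g : R -> R) : R :=
  sup [set `|g x| | x in `[0%R, 1%R]].

Definition gstep {R : realType} (n : nat) : R := 1 / (n.-1)%:R.
Definition gpt {R : realType} (n : nat) (i : 'I_n) : R := (i : nat)%:R * gstep n.

Definition Lmx {R : realType} (n : nat) : 'M[R]_n :=
  \matrix_(i, j) ((i == j) && ((i : nat) == 0%N))%:R.
Definition Rmx {R : realType} (n : nat) : 'M[R]_n :=
  \matrix_(i, j) ((i == j) && ((i : nat) == n.-1))%:R.

Definition Pmat {R : realType} (n : nat) (p : 'I_n -> R) : 'M[R]_n :=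
  gstep n *: diag_mx (\row_i p i).

Definition Dmat {R : realType} (n : nat) (p : 'I_n -> R) (Q : 'M[R]_n) : 'M[R]_n :=
  invmx (Pmat p) *m Q.

Definition SBP {R : realType} (n : nat) (p : 'I_n -> R) (Q : 'M[R]_n) : Prop :=
  (forall i, 0 < p i) /\ Q + Q^T = Rmx n - Lmx n.

Definition hmul {R : realType} (m n : nat) (A B : 'M[R]_(m, n)) : 'M[R]_(m, n) :=
  \matrix_(i, j) (A i j * B i j).

Definition normP {R : realType} (n : nat) (P : 'M[R]_n) (w : 'cV[R]_n) : R :=
  Num.sqrt ((w^T *m P *m w) 0 0).

Definition grid1 {R : realType} (n : nat) (f : R -> R) : 'cV[R]_n :=
  \col_i f (gpt i).

Definition commutator_bound {R : realType} (C0 : R) (n : nat) (P D : 'M[R]_n) : Prop :=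
  forall (ub : R -> R) (w : 'cV[R]_n), smooth1 ub ->
    normP P (D *m hmul (grid1 n ub) w - hmul (grid1 n ub) (D *m w))
      <= C0 * supnorm01 (derive1 ub) * normP P w.

(* A grid function w = (w_{0,0}, w_{0,1}, ..., w_{N-1,M-1})^T is stored as *)
(* the N x M matrix W with W i j = w_{i,j} (so w = vec of the rows of W).  *)
(* Under this identification  (A (x) B) w  corresponds to  A W B^T, hence *)
(*   d_x = D_x (x) I_M  :  W |-> D_x W,                                    *)
(*   d_y = I_N (x) D_y  :  W |-> W D_y^T,                                  *)
(*   L = L_N (x) I_M : W |-> L_N W,   R = R_N (x) I_M : W |-> R_N W,        *)
(*   D = I_N (x) L_M : W |-> W L_M^T, U = I_N (x) R_M : W |-> W R_M^T,      *)
(*   a diagonal matrix Sigma indexed like grid functions acts as Hadamard  *)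
(*   multiplication by its matrix of diagonal entries.                     *)

Definition grid2 {R : realType} (N M : nat) (f : R -> R -> R) : 'M[R]_(N, M) :=
  \matrix_(i, j) f (gpt i) (gpt j).

Definition dX {R : realType} (N M : nat) (Dx : 'M[R]_N) (W : 'M[R]_(N, M)) : 'M[R]_(N, M) :=
  Dx *m W.
Definition dY {R : realType} (N M : nat) (Dy : 'M[R]_M) (W : 'M[R]_(N, M)) : 'M[R]_(N, M) :=
  W *m Dy^T.

(* (V, W)_P = v^T (Px (x) Py) w, written entrywise *)
Definition ipP {R : realType} (N M : nat) (Px : 'M[R]_N) (Py : 'M[R]_M)
    (V W : 'M[R]_(N, M)) : R :=
  \sum_(i < N) \sum_(i' < N) \sum_(j < M) \sum_(j' < M)
     V i j * (Px i i' * Py j j') * W i' j'.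

Definition energy {R : realType} (N M : nat) (Px : 'M[R]_N) (Py : 'M[R]_M)
    (V1 V2 : 'M[R]_(N, M)) : R :=
  ipP Px Py V1 V1 + ipP Px Py V2 V2.

Definition Bop {R : realType} (N M : nat) (Px : 'M[R]_N) (Py : 'M[R]_M)
    (SL SR SD SU : 'M[R]_(N, M)) (W : 'M[R]_(N, M)) : 'M[R]_(N, M) :=
  invmx Px *m (hmul SL (Lmx N *m W) + hmul SR (Rmx N *m W))
  + (hmul SD (W *m (Lmx M)^T) + hmul SU (W *m (Rmx M)^T)) *m (invmx Py)^T.

(* right-hand side of  V_t = - u1 o d_x V - u2 o d_y V + C V - eps curl^2 V + B V *)
Definition rhs1 {R : realType} (N M : nat) (eps : R) (Dx : 'M[R]_N) (Dy : 'M[R]_M)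
    (U1 U2 : 'M[R]_(N, M)) (B : 'M[R]_(N, M) -> 'M[R]_(N, M))
    (V1 V2 : 'M[R]_(N, M)) : 'M[R]_(N, M) :=
  - hmul U1 (dX Dx V1) - hmul U2 (dY Dy V1)
  + (hmul (- dY Dy U2) V1 + hmul (dY Dy U1) V2)
  - eps *: (- dY Dy (dY Dy V1) + dX Dx (dY Dy V2))
  + B V1.

Definition rhs2 {R : realType} (N M : nat) (eps : R) (Dx : 'M[R]_N) (Dy : 'M[R]_M)
    (U1 U2 : 'M[R]_(N, M)) (B : 'M[R]_(N, M) -> 'M[R]_(N, M))
    (V1 V2 : 'M[R]_(N, M)) : 'M[R]_(N, M) :=
  - hmul U1 (dX Dx V2) - hmul U2 (dY Dy V2)
  + (hmul (dX Dx U2) V1 - hmul (dX Dx U1) V2)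
  - eps *: (dX Dx (dY Dy V1) - dX Dx (dX Dx V2))
  + B V2.

Definition mxmaxabs {R : realType} (m n : nat) (A : 'M[R]_(m, n)) : R :=
  \big[Num.max/0]_(i < m) \big[Num.max/0]_(j < n) `|A i j|.

Definition rowpen {R : realType} (N M : nat) (k : nat) (s : R) : 'M[R]_(N, M) :=
  \matrix_(i, j) (if (i : nat) == k then s else 0).
Definition colpen {R : realType} (N M : nat) (k : nat) (s : R) : 'M[R]_(N, M) :=
  \matrix_(i, j) (if (j : nat) == k then s else 0).

(* Energy method.  Testing the scheme against V in the P-inner product, summation by
   parts turns each convective term (V, u o D V) into half a boundary term plus the
   commutator D (u o V) - u o D V, which the assumed commutator estimate bounds by the
   energy, while the viscous term (V, curl^2 V) becomes |curl V|^2 plus boundary terms.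
   The coupling term C V is bounded by the largest discrete derivative of u.  The
   penalty conditions are exactly what makes the SAT term (V, B V) dominate every
   boundary term node by node, so d/dt |V|^2 <= c |V|^2 and Gronwall's lemma concludes. *)

From HB Require Import structures.
From mathcomp Require Import all_boot all_order all_algebra.
From mathcomp Require Import all_classical all_reals all_analysis.
From mathcomp Require Import ring lra.
Set Implicit Arguments. Unset Strict Implicit. Unset Printing Implicit Defensive.
Import Order.TTheory GRing.Theory Num.Theory.
Import numFieldNormedType.Exports.
Local Open Scope ring_scope.
Local Open Scope classical_set_scope.

Section GridForms.
Variable R : realType.

Definition Pdiag n (p : 'I_n -> R) (i : 'I_n) : R := gstep n * p i.

Lemma PmatE n (p : 'I_n -> R) : Pmat p = diag_mx (\row_i Pdiag p i).
Proof. by apply/matrixP => i j; rewrite !mxE mulrnAr. Qed.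

Lemma gstep_gt0 n : (2 <= n)%N -> 0 < gstep n :> R.
Proof. by move=> hn; rewrite /gstep mul1r invr_gt0 ltr0n; case: n hn => [|[]]. Qed.

Section PositiveWeights.
Variables (n : nat) (p : 'I_n -> R).
Hypotheses (hn : (2 <= n)%N) (hp : forall i, 0 < p i).

Lemma Pdiag_gt0 i : 0 < Pdiag p i.
Proof. by rewrite mulr_gt0 // gstep_gt0. Qed.

Lemma Pmat_unit : Pmat p \in unitmx.
Proof.
rewrite unitmxE PmatE det_diag unitfE; apply/prodf_neq0 => i _.
by rewrite mxE gt_eqF ?Pdiag_gt0.
Qed.

Lemma Pdiag_invmx m (X : 'M[R]_(n, m)) i j :
  Pdiag p i * (invmx (Pmat p) *m X) i j = X i j.
Proof.
have := congr1 (fun A : 'M[R]_(n, m) => A i j) (mulKVmx Pmat_unit X).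
by rewrite PmatE mul_diag_mx mxE /= mxE.
Qed.

Lemma invmxT_Pdiag m (X : 'M[R]_(m, n)) i j :
  (X *m (invmx (Pmat p))^T) i j * Pdiag p j = X i j.
Proof.
have -> : X i j = X^T j i by rewrite mxE.
rewrite -(Pdiag_invmx X^T j i) mulrC; congr (_ * _).
by rewrite -[X in LHS]trmxK -trmx_mul [LHS]mxE.
Qed.

Lemma Pdiag_dX m Q (W : 'M[R]_(n, m)) i j :
  Pdiag p i * dX (Dmat p Q) W i j = (Q *m W) i j.
Proof. by rewrite /dX /Dmat -mulmxA Pdiag_invmx. Qed.

End PositiveWeights.

Lemma discriminant_le0 (a s b : R) :
  0 <= a -> (forall t, 0 <= t ^+ 2 * a - 2 * t * s + b) -> s ^+ 2 <= a * b.
Proof.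
move=> ha quad; have [a0|] := ltrP 0 a.
  rewrite -subr_ge0.
  have -> : a * b - s ^+ 2 = a * ((s / a) ^+ 2 * a - 2 * (s / a) * s + b).
    by field; rewrite gt_eqF.
  by rewrite mulr_ge0 ?quad // ltW.
rewrite le_eqVlt ltNge ha orbF => /eqP a0.
rewrite a0 mul0r; have [->|s0] := eqVneq s 0; first by rewrite expr0n.
have := quad ((b + 1) / (2 * s)); rewrite a0.
have -> : ((b + 1) / (2 * s)) ^+ 2 * 0 - 2 * ((b + 1) / (2 * s)) * s + b = -1 by field.
by rewrite ler0N1.
Qed.

Definition wdot n m (wx : 'I_n -> R) (wy : 'I_m -> R) (A B : 'M[R]_(n, m)) : R :=
  \sum_i \sum_j wx i * wy j * A i j * B i j.

Section WeightedDot.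
Variables (n m : nat) (wx : 'I_n -> R) (wy : 'I_m -> R).
Implicit Types A B C U : 'M[R]_(n, m).

Lemma wdotC A B : wdot wx wy A B = wdot wx wy B A.
Proof. by apply: eq_bigr => i _; apply: eq_bigr => j _; ring. Qed.

Lemma wdotDr A B C : wdot wx wy A (B + C) = wdot wx wy A B + wdot wx wy A C.
Proof.
rewrite -big_split; apply: eq_bigr => i _; rewrite -big_split.
by apply: eq_bigr => j _; rewrite mxE mulrDr.
Qed.

Lemma wdotZr A B c : wdot wx wy A (c *: B) = c * wdot wx wy A B.
Proof.
rewrite mulr_sumr; apply: eq_bigr => i _; rewrite mulr_sumr.
by apply: eq_bigr => j _; rewrite mxE; ring.
Qed.

Lemma wdotNr A B : wdot wx wy A (- B) = - wdot wx wy A B.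
Proof. by rewrite -scaleN1r wdotZr mulN1r. Qed.

Lemma wdotBr A B C : wdot wx wy A (B - C) = wdot wx wy A B - wdot wx wy A C.
Proof. by rewrite wdotDr wdotNr. Qed.

Lemma wdotBl A B C : wdot wx wy (A - B) C = wdot wx wy A C - wdot wx wy B C.
Proof. by rewrite wdotC wdotBr wdotC [wdot _ _ C B]wdotC. Qed.

Lemma wdot_hmul U A B : wdot wx wy A (hmul U B) = wdot wx wy (hmul U A) B.
Proof. by apply: eq_bigr => i _; apply: eq_bigr => j _; rewrite !mxE; ring. Qed.

Lemma wdot_tr A B : wdot wx wy A B = wdot wy wx A^T B^T.
Proof.
rewrite /wdot exchange_big; apply: eq_bigr => j _; apply: eq_bigr => i _.
by rewrite !mxE; ring.
Qed.

Lemma wdot_col A B :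
  wdot wx wy A B = \sum_j wy j * wdot wx (fun=> 1) (col j A) (col j B).
Proof.
rewrite /wdot exchange_big; apply: eq_bigr => j _; rewrite mulr_sumr.
by apply: eq_bigr => i _; rewrite big_ord1 !mxE; ring.
Qed.

Hypotheses (hx : forall i, 0 <= wx i) (hy : forall j, 0 <= wy j).

Lemma wdot_ge0 A : 0 <= wdot wx wy A A.
Proof.
apply: sumr_ge0 => i _; apply: sumr_ge0 => j _.
by rewrite -mulrA; apply: mulr_ge0; [exact: mulr_ge0 | rewrite -expr2 sqr_ge0].
Qed.

Lemma wdot_cauchy_schwarz A B :
  wdot wx wy A B <= Num.sqrt (wdot wx wy A A) * Num.sqrt (wdot wx wy B B).
Proof.
have quad t : 0 <= t ^+ 2 * wdot wx wy A A - 2 * t * wdot wx wy A B + wdot wx wy B B.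
  have := wdot_ge0 (t *: A - B).
  rewrite wdotBr !wdotBl !wdotZr [wdot _ _ (t *: A) _]wdotC wdotZr.
  by rewrite [wdot _ _ (t *: A) _]wdotC wdotZr [wdot _ _ B A]wdotC; congr (_ <= _); ring.
have := discriminant_le0 (wdot_ge0 A) quad.
rewrite -sqrtrM ?wdot_ge0 // => /ler_wsqrtr; rewrite sqrtr_sqr.
exact: le_trans (ler_norm _).
Qed.

End WeightedDot.

Lemma normP_wdot n (p : 'I_n -> R) (w : 'cV[R]_n) :
  normP (Pmat p) w = Num.sqrt (wdot (Pdiag p) (fun=> 1) w w).
Proof.
rewrite /normP -mulmxA mxE; congr Num.sqrt; apply: eq_bigr => i _.
by rewrite big_ord1 PmatE mul_diag_mx !mxE; ring.
Qed.

Lemma Pmat_entry n (p : 'I_n -> R) i k : Pmat p i k = Pdiag p i *+ (i == k).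
Proof. by rewrite PmatE !mxE. Qed.

Lemma ipP_wdot n m (px : 'I_n -> R) (py : 'I_m -> R) V W :
  ipP (Pmat px) (Pmat py) V W = wdot (Pdiag px) (Pdiag py) V W.
Proof.
apply: eq_bigr => i _; rewrite (bigD1 i) //= [X in _ + X]big1 ?addr0; last first.
  move=> k; rewrite eq_sym => /negbTE ik.
  by apply: big1 => j _; apply: big1 => l _; rewrite Pmat_entry ik mulr0n mul0r mulr0 mul0r.
apply: eq_bigr => j _; rewrite (bigD1 j) //= [X in _ + X]big1 ?addr0; last first.
  move=> l; rewrite eq_sym => /negbTE jl.
  by rewrite [Pmat py _ _]Pmat_entry jl mulr0n mulr0 mulr0 mul0r.
by rewrite !Pmat_entry !eqxx !mulr1n; ring.
Qed.

End GridForms.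

Section SummationByParts.
Variable R : realType.

Definition bsign n (i : 'I_n) : R := ((i : nat) == n.-1)%:R - ((i : nat) == 0%N)%:R.

Definition bform_x n m (wy : 'I_m -> R) (A B : 'M[R]_(n, m)) : R :=
  \sum_i \sum_j wy j * bsign i * A i j * B i j.
Definition bform_y n m (wx : 'I_n -> R) (A B : 'M[R]_(n, m)) : R :=
  \sum_i \sum_j wx i * bsign j * A i j * B i j.

Lemma SBP_sym n (p : 'I_n -> R) Q : SBP p Q -> Q + Q^T = diag_mx (\row_i bsign i).
Proof.
case=> _ ->; apply/matrixP => i j; rewrite !mxE /bsign.
by case: (i == j); rewrite /= ?mulr1n ?mulr0n ?subr0.
Qed.

Lemma sum_weighted_trace n m (wy : 'I_m -> R) (X Y : 'M[R]_(n, m)) :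
  \sum_i \sum_j wy j * X i j * Y i j = \tr (X *m diag_mx (\row_j wy j) *m Y^T).
Proof.
rewrite /mxtrace; apply: eq_bigr => i _; rewrite mxE; apply: eq_bigr => j _.
by rewrite mul_mx_diag !mxE; ring.
Qed.

Lemma sum_weighted_mulmx n m (wy : 'I_m -> R) (A : 'M[R]_n) (V W : 'M[R]_(n, m)) :
  \sum_i \sum_j wy j * V i j * (A *m W) i j = \sum_i \sum_j wy j * W i j * (A^T *m V) i j.
Proof.
rewrite !sum_weighted_trace -[RHS]mxtrace_tr !trmx_mul !trmxK tr_diag_mx.
by rewrite -!mulmxA [RHS]mxtrace_mulC !mulmxA.
Qed.

Lemma wdot_dX_sbp n m (p : 'I_n -> R) Q (wy : 'I_m -> R) (V W : 'M[R]_(n, m)) :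
  (2 <= n)%N -> SBP p Q ->
  wdot (Pdiag p) wy V (dX (Dmat p Q) W) + wdot (Pdiag p) wy (dX (Dmat p Q) V) W
  = bform_x wy V W.
Proof.
move=> hn hQ.
have dXE X Y : wdot (Pdiag p) wy X (dX (Dmat p Q) Y) = \sum_i \sum_j wy j * X i j * (Q *m Y) i j.
  apply: eq_bigr => i _; apply: eq_bigr => j _.
  by rewrite -(Pdiag_dX hn hQ.1); ring.
rewrite [wdot _ _ (dX _ V) W]wdotC !dXE [in X in _ + X]sum_weighted_mulmx -big_split.
apply: eq_bigr => i _; rewrite -big_split; apply: eq_bigr => j _.
rewrite /= -mulrDr.
have -> : (Q *m W) i j + (Q^T *m W) i j = ((Q + Q^T) *m W) i j.
  by rewrite mulmxDl [RHS]mxE.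
by rewrite (SBP_sym hQ) mul_diag_mx !mxE; ring.
Qed.

Lemma dY_tr n m (D : 'M[R]_m) (W : 'M[R]_(n, m)) : (dY D W)^T = dX D W^T.
Proof. by rewrite /dY /dX trmx_mul trmxK. Qed.

Lemma wdot_dY_sbp n m (p : 'I_m -> R) Q (wx : 'I_n -> R) (V W : 'M[R]_(n, m)) :
  (2 <= m)%N -> SBP p Q ->
  wdot wx (Pdiag p) V (dY (Dmat p Q) W) + wdot wx (Pdiag p) (dY (Dmat p Q) V) W
  = bform_y wx V W.
Proof.
move=> hm hQ; rewrite !(wdot_tr wx) !dY_tr wdot_dX_sbp // /bform_x exchange_big.
by apply: eq_bigr => i _; apply: eq_bigr => j _; rewrite !mxE.
Qed.

End SummationByParts.

Arguments bsign {R n} i.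

Section ConvectionAndCoupling.
Variable R : realType.

Definition commutator_le (K : R) n (P D : 'M[R]_n) (g : 'cV[R]_n) : Prop :=
  forall w, normP P (D *m hmul g w - hmul g (D *m w)) <= K * normP P w.

Lemma col_mulmx n m k j (A : 'M[R]_(n, k)) (B : 'M[R]_(k, m)) :
  col j (A *m B) = A *m col j B.
Proof. by rewrite !colE mulmxA. Qed.

Lemma col_hmul n m j (A B : 'M[R]_(n, m)) : col j (hmul A B) = hmul (col j A) (col j B).
Proof. by apply/matrixP => i k; rewrite !mxE. Qed.

Lemma colB n m j (A B : 'M[R]_(n, m)) : col j (A - B) = col j A - col j B.
Proof. by apply/matrixP => i k; rewrite !mxE. Qed.

Lemma hmul_tr n m (A B : 'M[R]_(n, m)) : (hmul A B)^T = hmul A^T B^T.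
Proof. by apply/matrixP => i j; rewrite !mxE. Qed.

Lemma bform_y_tr n m (wx : 'I_n -> R) (A B : 'M[R]_(n, m)) :
  bform_y wx A B = bform_x wx A^T B^T.
Proof.
rewrite /bform_x exchange_big; apply: eq_bigr => j _; apply: eq_bigr => i _.
by rewrite !mxE.
Qed.

Lemma wdot_commutator_le n m (p : 'I_n -> R) Q (wy : 'I_m -> R) (U V : 'M[R]_(n, m)) K :
  (2 <= n)%N -> (forall i, 0 < p i) -> (forall j, 0 <= wy j) ->
  (forall j, commutator_le K (Pmat p) (Dmat p Q) (col j U)) ->
  wdot (Pdiag p) wy V (dX (Dmat p Q) (hmul U V) - hmul U (dX (Dmat p Q) V))
  <= K * wdot (Pdiag p) wy V V.
Proof.
move=> hn hp hy hK; rewrite !(wdot_col (Pdiag p) wy) mulr_sumr.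
apply: ler_sum => j _; rewrite mulrCA; apply: ler_wpM2l => //.
have hw i : 0 <= Pdiag p i by exact/ltW/Pdiag_gt0.
rewrite colB /dX !col_mulmx !col_hmul col_mulmx.
apply: le_trans (wdot_cauchy_schwarz hw (fun=> ler01) _ _) _.
rewrite -!normP_wdot -[wdot _ _ (col j V) _]sqr_sqrtr ?wdot_ge0 // -normP_wdot.
by rewrite expr2 mulrCA; apply: ler_wpM2l; [exact: sqrtr_ge0 | exact: hK].
Qed.

Lemma convection_x_le n m (p : 'I_n -> R) Q (wy : 'I_m -> R) (U V : 'M[R]_(n, m)) K :
  (2 <= n)%N -> SBP p Q -> (forall j, 0 <= wy j) ->
  (forall j, commutator_le K (Pmat p) (Dmat p Q) (col j U)) ->
  - wdot (Pdiag p) wy V (hmul U (dX (Dmat p Q) V))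
  <= (K * wdot (Pdiag p) wy V V - bform_x wy V (hmul U V)) / 2.
Proof.
move=> hn hQ hy hK.
have := wdot_dX_sbp wy V (hmul U V) hn hQ.
rewrite [wdot _ _ (dX _ V) _]wdotC -wdot_hmul.
have := wdot_commutator_le V hn hQ.1 hy hK; rewrite wdotBr.
lra.
Qed.

Lemma convection_y_le n m (p : 'I_m -> R) Q (wx : 'I_n -> R) (U V : 'M[R]_(n, m)) K :
  (2 <= m)%N -> SBP p Q -> (forall i, 0 <= wx i) ->
  (forall i, commutator_le K (Pmat p) (Dmat p Q) (col i U^T)) ->
  - wdot wx (Pdiag p) V (hmul U (dY (Dmat p Q) V))
  <= (K * wdot wx (Pdiag p) V V - bform_y wx V (hmul U V)) / 2.
Proof.
move=> hm hQ hx hK; rewrite !(wdot_tr wx) bform_y_tr !hmul_tr dY_tr.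
exact: convection_x_le.
Qed.

Lemma cross_term_le (w v1 v2 a b c d k : R) : 0 <= w ->
  `|a| <= k -> `|b| <= k -> `|c| <= k -> `|d| <= k ->
  w * v1 * (- a * v1 + b * v2) + w * v2 * (c * v1 - d * v2)
  <= 2 * k * (w * v1 * v1 + w * v2 * v2).
Proof.
move=> hw ha hb hc hd.
have /andP[ha1 ha2] : - k <= a <= k by rewrite -ler_norml.
have /andP[hb1 hb2] : - k <= b <= k by rewrite -ler_norml.
have /andP[hc1 hc2] : - k <= c <= k by rewrite -ler_norml.
have /andP[hd1 hd2] : - k <= d <= k by rewrite -ler_norml.
have key : - a * v1 ^+ 2 + (b + c) * v1 * v2 - d * v2 ^+ 2 <= 2 * k * (v1 ^+ 2 + v2 ^+ 2).
  have : 0 <= (k + a) * v1 ^+ 2 by apply: mulr_ge0; [lra | exact: sqr_ge0].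
  have : 0 <= (k + d) * v2 ^+ 2 by apply: mulr_ge0; [lra | exact: sqr_ge0].
  have : 0 <= (k - (b + c) / 2) * (v1 + v2) ^+ 2 by apply: mulr_ge0; [lra | exact: sqr_ge0].
  have : 0 <= (k + (b + c) / 2) * (v1 - v2) ^+ 2 by apply: mulr_ge0; [lra | exact: sqr_ge0].
  lra.
have := ler_wpM2l hw key; lra.
Qed.

Lemma wdot_cross_le n m (wx : 'I_n -> R) (wy : 'I_m -> R) (A B C D V1 V2 : 'M[R]_(n, m)) k :
  (forall i, 0 <= wx i) -> (forall j, 0 <= wy j) ->
  (forall i j, `|A i j| <= k) -> (forall i j, `|B i j| <= k) ->
  (forall i j, `|C i j| <= k) -> (forall i j, `|D i j| <= k) ->
  wdot wx wy V1 (hmul (- A) V1 + hmul B V2) + wdot wx wy V2 (hmul C V1 - hmul D V2)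
  <= 2 * k * (wdot wx wy V1 V1 + wdot wx wy V2 V2).
Proof.
move=> hx hy hA hB hC hD; rewrite /wdot -!big_split /= mulr_sumr.
apply: ler_sum => i _; rewrite -!big_split /= mulr_sumr; apply: ler_sum => j _.
have := cross_term_le (V1 i j) (V2 i j) (mulr_ge0 (hx i) (hy j)) (hA i j) (hB i j) (hC i j) (hD i j).
by rewrite !mxE.
Qed.

Lemma mxmaxabs_ge n m (A : 'M[R]_(n, m)) i j : `|A i j| <= mxmaxabs A.
Proof.
have bigmax_ge k (F : 'I_k -> R) l : F l <= \big[Num.max/0]_(l < k) F l.
  by rewrite (bigD1 l) //= le_max lexx.
exact: le_trans (bigmax_ge _ (fun j => `|A i j|) j) (bigmax_ge _ _ i).
Qed.

End ConvectionAndCoupling.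

Section Penalties.
Variable R : realType.

Definition bpen n m (SA SB : 'M[R]_(n, m)) i j : R :=
  SA i j * ((i : nat) == 0%N)%:R + SB i j * ((i : nat) == n.-1)%:R.

Definition pen_form n m (wx : 'I_n -> R) (wy : 'I_m -> R) (SL SR SD SU V : 'M[R]_(n, m)) :=
  \sum_i \sum_j (wy j * bpen SL SR i j + wx i * bpen SD^T SU^T j i) * V i j ^+ 2.

Definition inflow_penalty n m (U1 U2 SL SR SD SU : 'M[R]_(n, m)) : Prop :=
  [/\ forall (i : 'I_n) (j : 'I_m), (i : nat) == n.-1 -> SR i j <= Num.min (U1 i j) 0 / 2,
      forall (i : 'I_n) (j : 'I_m), (i : nat) == 0%N -> SL i j <= - (Num.max (U1 i j) 0 / 2),
      forall (i : 'I_n) (j : 'I_m), (j : nat) == m.-1 -> SU i j <= Num.min (U2 i j) 0 / 2 &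
      forall (i : 'I_n) (j : 'I_m), (j : nat) == 0%N -> SD i j <= - (Num.max (U2 i j) 0 / 2)].

Lemma LmxE n : Lmx n = diag_mx (\row_i ((i : nat) == 0%N)%:R) :> 'M[R]_n.
Proof. by apply/matrixP => i j; rewrite !mxE; case: (i == j); rewrite ?andbF ?andbT. Qed.

Lemma RmxE n : Rmx n = diag_mx (\row_i ((i : nat) == n.-1)%:R) :> 'M[R]_n.
Proof. by apply/matrixP => i j; rewrite !mxE; case: (i == j); rewrite ?andbF ?andbT. Qed.

Lemma wdot_Bop n m (px : 'I_n -> R) (py : 'I_m -> R) (SL SR SD SU V : 'M[R]_(n, m)) :
  (2 <= n)%N -> (2 <= m)%N -> (forall i, 0 < px i) -> (forall j, 0 < py j) ->
  wdot (Pdiag px) (Pdiag py) V (Bop (Pmat px) (Pmat py) SL SR SD SU V)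
  = pen_form (Pdiag px) (Pdiag py) SL SR SD SU V.
Proof.
move=> hn hm hpx hpy; apply: eq_bigr => i _; apply: eq_bigr => j _.
rewrite /Bop mxE; set X := hmul SL _ + _; set Y := hmul SD _ + _.
have -> : forall a b, Pdiag px i * Pdiag py j * V i j * (a + b)
    = Pdiag py j * V i j * (Pdiag px i * a) + Pdiag px i * V i j * (b * Pdiag py j).
  by move=> a b; ring.
rewrite Pdiag_invmx // invmxT_Pdiag // /X /Y !LmxE !RmxE !tr_diag_mx.
by rewrite !mul_diag_mx !mul_mx_diag /bpen !mxE; ring.
Qed.

Lemma pen_formDZ n m (wx : 'I_n -> R) (wy : 'I_m -> R) (SL SR SD SU TL TR TD TU V : 'M[R]_(n, m)) e :
  pen_form wx wy (SL + e *: TL) (SR + e *: TR) (SD + e *: TD) (SU + e *: TU) V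
  = pen_form wx wy SL SR SD SU V + e * pen_form wx wy TL TR TD TU V.
Proof.
rewrite mulr_sumr -big_split /=; apply: eq_bigr => i _.
rewrite mulr_sumr -big_split /=; apply: eq_bigr => j _.
by rewrite /bpen !mxE; ring.
Qed.

Lemma inflow_bpen_le n (i : 'I_n) (sl sr u : R) : (2 <= n)%N ->
  ((i : nat) == n.-1 -> sr <= Num.min u 0 / 2) ->
  ((i : nat) == 0%N -> sl <= - (Num.max u 0 / 2)) ->
  sl * ((i : nat) == 0%N)%:R + sr * ((i : nat) == n.-1)%:R <= bsign i * u / 2.
Proof.
move=> hn hr hl; rewrite /bsign.
have hmin : Num.min u 0 <= u by rewrite ge_min lexx.
have hmax : u <= Num.max u 0 by rewrite le_max lexx.
have [i0|i0] := eqVneq (i : nat) 0%N.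
  have n1 : (0 == n.-1)%N = false by case: n i hn {hr hl i0} => [|[|]].
  by have := hl (introT eqP i0); rewrite i0 n1 /=; lra.
have [i1|i1] := eqVneq (i : nat) n.-1.
  by have := hr (introT eqP i1); rewrite /=; lra.
by rewrite /=; lra.
Qed.

Lemma viscous_bpen_le n (i : 'I_n) (w g p sl sr : R) : (2 <= n)%N -> 0 < g * p ->
  (((i : nat) == 0%N) || ((i : nat) == n.-1) -> w = g * p) ->
  sl <= - (1 / (2 * p * g)) -> sr <= - (1 / (2 * p * g)) ->
  2 * w * ((if (i : nat) == 0%N then sl else 0) * ((i : nat) == 0%N)%:R
           + (if (i : nat) == n.-1 then sr else 0) * ((i : nat) == n.-1)%:R)
  <= - bsign i ^+ 2.
Proof.
move=> hn gp hw hl hr.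
have scaled s : s <= - (1 / (2 * p * g)) -> 2 * (g * p) * s <= -1.
  move=> hs; have := ler_wpM2l (ltW (mulr_gt0 (ltr0Sn R 1) gp)) hs.
  have : g * p != 0 by rewrite gt_eqF.
  rewrite mulf_eq0 negb_or => /andP[g0 p0].
  have -> // : 2 * (g * p) * - (1 / (2 * p * g)) = -1 by field; rewrite g0 p0.
rewrite /bsign; have [i0|i0] := eqVneq (i : nat) 0%N.
  have n1 : (0 == n.-1)%N = false by case: n i hn {hw i0} => [|[|]].
  by rewrite hw ?i0 // n1 /=; have := scaled _ hl; lra.
have [i1|i1] := eqVneq (i : nat) n.-1.
  by rewrite hw ?i1 ?eqxx ?orbT //=; have := scaled _ hr; lra.
by rewrite !mul0r addr0 mulr0 subrr expr0n /= oppr0.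
Qed.

Lemma rowpen_bpen_le n m (px : 'I_n -> R) (p sl sr : R) : (2 <= n)%N -> 0 < p ->
  (forall i : 'I_n, ((i : nat) == 0%N) || ((i : nat) == n.-1) -> px i = p) ->
  sl <= - (1 / (2 * p * gstep n)) -> sr <= - (1 / (2 * p * gstep n)) ->
  forall i j, 2 * Pdiag px i * bpen (rowpen n m 0 sl) (rowpen n m n.-1 sr) i j <= - bsign i ^+ 2.
Proof.
move=> hn hp hpx hl hr i j; rewrite /bpen !mxE.
apply: viscous_bpen_le hl hr => //; first by rewrite mulr_gt0 ?gstep_gt0.
by move=> /hpx; rewrite /Pdiag => ->.
Qed.

Lemma colpen_bpen_le n m (py : 'I_m -> R) (p sd su : R) : (2 <= m)%N -> 0 < p ->
  (forall j : 'I_m, ((j : nat) == 0%N) || ((j : nat) == m.-1) -> py j = p) ->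
  sd <= - (1 / (2 * p * gstep m)) -> su <= - (1 / (2 * p * gstep m)) ->
  forall (i : 'I_n) j,
    2 * Pdiag py j * bpen (colpen n m 0 sd)^T (colpen n m m.-1 su)^T j i <= - bsign j ^+ 2.
Proof.
move=> hm hp hpy hd hu i j; rewrite /bpen !mxE.
apply: viscous_bpen_le hd hu => //; first by rewrite mulr_gt0 ?gstep_gt0.
by move=> /hpy; rewrite /Pdiag => ->.
Qed.

End Penalties.

Section BoundaryDissipation.
Variables (R : realType) (n m : nat) (wx : 'I_n -> R) (wy : 'I_m -> R).

Lemma inflow_pen_le (U1 U2 SL SR SD SU V : 'M[R]_(n, m)) :
  (2 <= n)%N -> (2 <= m)%N -> (forall i, 0 <= wx i) -> (forall j, 0 <= wy j) ->
  inflow_penalty U1 U2 SL SR SD SU ->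
  2 * pen_form wx wy SL SR SD SU V <= bform_x wy V (hmul U1 V) + bform_y wx V (hmul U2 V).
Proof.
move=> hn hm hx hy [hR hL hU hD]; rewrite mulr_sumr -big_split /=.
apply: ler_sum => i _; rewrite mulr_sumr -big_split /=; apply: ler_sum => j _.
have := inflow_bpen_le hn (hR i j) (hL i j).
move=> /(ler_wpM2l (mulr_ge0 (hy j) (sqr_ge0 (V i j)))).
have := inflow_bpen_le hm (hU i j) (hD i j).
move=> /(ler_wpM2l (mulr_ge0 (hx i) (sqr_ge0 (V i j)))).
rewrite /bpen !mxE; lra.
Qed.

Lemma viscous_pointwise (ax ay w v1 v2 bx by_ ex ey : R) : 0 < ax -> 0 < ay ->
  2 * ax * ex <= - bx ^+ 2 -> 2 * ay * ey <= - by_ ^+ 2 ->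
  (ay * ex + ax * ey) * (v1 ^+ 2 + v2 ^+ 2) <= ax * ay * w * w + ax * by_ * v1 * w - ay * bx * v2 * w.
Proof.
(* Times 2 ax ay, the gap is the sum of the six nonnegative terms below; the last
   two are the squares that absorb the boundary cross terms by_ v1 w and bx v2 w. *)
move=> hx hy hex hey; rewrite -subr_ge0 -(pmulr_rge0 _ (mulr_gt0 (mulr_gt0 (ltr0Sn R 1) hx) hy)).
have sq (x : R) : 0 <= x ^+ 2 := sqr_ge0 x.
have q : 0 <= v1 ^+ 2 + v2 ^+ 2 by rewrite addr_ge0.
have ex' : 0 <= - bx ^+ 2 - 2 * ax * ex by rewrite subr_ge0.
have ey' : 0 <= - by_ ^+ 2 - 2 * ay * ey by rewrite subr_ge0.
have := mulr_ge0 (sq ay) (mulr_ge0 ex' q); have := mulr_ge0 (sq ax) (mulr_ge0 ey' q).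
have := mulr_ge0 (sq (ay * bx)) (sq v1); have := mulr_ge0 (sq (ax * by_)) (sq v2).
have := mulr_ge0 (sq ax) (sq (ay * w + by_ * v1)).
have := mulr_ge0 (sq ay) (sq (ax * w - bx * v2)).
lra.
Qed.

Lemma viscous_pen_le (SL SR SD SU V1 V2 W : 'M[R]_(n, m)) :
  (forall i, 0 < wx i) -> (forall j, 0 < wy j) ->
  (forall i j, 2 * wx i * bpen SL SR i j <= - bsign i ^+ 2) ->
  (forall i j, 2 * wy j * bpen SD^T SU^T j i <= - bsign j ^+ 2) ->
  pen_form wx wy SL SR SD SU V1 + pen_form wx wy SL SR SD SU V2
  <= wdot wx wy W W + bform_y wx V1 W - bform_x wy V2 W.
Proof.
move=> hx hy hex hey; rewrite -!big_split -sumrB /=; apply: ler_sum => i _.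
rewrite -!big_split -sumrB /=; apply: ler_sum => j _.
have := viscous_pointwise (W i j) (V1 i j) (V2 i j) (hx i) (hy j) (hex i j) (hey i j).
lra.
Qed.

End BoundaryDissipation.

Lemma wdot_rhs (R : realType) n m (wx : 'I_n -> R) (wy : 'I_m -> R) (A X Y Z W T : 'M[R]_(n, m)) e :
  wdot wx wy A (- X - Y + Z - e *: W + T)
  = - wdot wx wy A X - wdot wx wy A Y + wdot wx wy A Z - e * wdot wx wy A W + wdot wx wy A T.
Proof. by rewrite !wdotDr !wdotNr wdotZr. Qed.

Section EnergyRate.
Variables (R : realType) (N M : nat) (px : 'I_N -> R) (Qx : 'M[R]_N)
  (py : 'I_M -> R) (Qy : 'M[R]_M).
Hypotheses (hN : (2 <= N)%N) (hM : (2 <= M)%N) (hQx : SBP px Qx) (hQy : SBP py Qy).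

Local Notation Dx := (Dmat px Qx).
Local Notation Dy := (Dmat py Qy).
Local Notation dot := (wdot (Pdiag px) (Pdiag py)).

Lemma wdot_curl2 (V1 V2 : 'M[R]_(N, M)) :
  let W := dX Dx V2 - dY Dy V1 in
  dot V1 (- dY Dy (dY Dy V1) + dX Dx (dY Dy V2)) + dot V2 (dX Dx (dY Dy V1) - dX Dx (dX Dx V2))
  = dot W W + bform_y (Pdiag px) V1 W - bform_x (Pdiag py) V2 W.
Proof.
move=> W.
have -> : - dY Dy (dY Dy V1) + dX Dx (dY Dy V2) = dY Dy W.
  by rewrite /W /dY /dX mulmxBl mulmxA addrC.
have -> : dX Dx (dY Dy V1) - dX Dx (dX Dx V2) = - dX Dx W.
  by rewrite /W /dX /dY mulmxBr opprB.
have := wdot_dX_sbp (Pdiag py) V2 W hN hQx.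
have := wdot_dY_sbp (Pdiag px) V1 W hM hQy.
rewrite wdotNr {3}/W wdotBl; lra.
Qed.

Lemma energy_rate_le (eps p K1 K2 : R) (U1 U2 sL' sR' sD' sU' V1 V2 : 'M[R]_(N, M))
    (sL'' sR'' sD'' sU'' : R) :
  let B := Bop (Pmat px) (Pmat py) (sL' + eps *: rowpen N M 0 sL'')
    (sR' + eps *: rowpen N M N.-1 sR'') (sD' + eps *: colpen N M 0 sD'')
    (sU' + eps *: colpen N M M.-1 sU'') in
  let k := Num.max (Num.max (mxmaxabs (dX Dx U1)) (mxmaxabs (dY Dy U1)))
                   (Num.max (mxmaxabs (dX Dx U2)) (mxmaxabs (dY Dy U2))) in
  0 < eps ->
  (forall i : 'I_N, ((i : nat) == 0%N) || ((i : nat) == N.-1) -> px i = p) ->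
  (forall j : 'I_M, ((j : nat) == 0%N) || ((j : nat) == M.-1) -> py j = p) ->
  (forall j, commutator_le K1 (Pmat px) Dx (col j U1)) ->
  (forall i, commutator_le K2 (Pmat py) Dy (col i U2^T)) ->
  inflow_penalty U1 U2 sL' sR' sD' sU' ->
  sR'' <= - (1 / (2 * p * gstep N)) -> sL'' <= - (1 / (2 * p * gstep N)) ->
  sU'' <= - (1 / (2 * p * gstep M)) -> sD'' <= - (1 / (2 * p * gstep M)) ->
  dot V1 (rhs1 eps Dx Dy U1 U2 B V1 V2) + dot V2 (rhs2 eps Dx Dy U1 U2 B V1 V2)
  <= ((K1 + K2) / 2 + 2 * k) * (dot V1 V1 + dot V2 V2).
Proof.
move=> B k he hpx hpy hK1 hK2 hinf hR hL hU hD.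
have hp : 0 < p by rewrite -(hpx (Ordinal (ltnW hN))) ?eqxx // hQx.1.
have wx0 i : 0 <= Pdiag px i := ltW (Pdiag_gt0 hN hQx.1 i).
have wy0 j : 0 <= Pdiag py j := ltW (Pdiag_gt0 hM hQy.1 j).
have kA (A : 'M[R]_(N, M)) : mxmaxabs A <= k -> forall i j, `|A i j| <= k.
  by move=> hA i j; exact: le_trans (mxmaxabs_ge A i j) hA.
have [k1 k2 k3 k4] : [/\ mxmaxabs (dX Dx U1) <= k, mxmaxabs (dY Dy U1) <= k,
    mxmaxabs (dX Dx U2) <= k & mxmaxabs (dY Dy U2) <= k].
  by split; rewrite /k !le_max lexx ?orbT.
have cross := wdot_cross_le V1 V2 wx0 wy0 (kA _ k4) (kA _ k2) (kA _ k3) (kA _ k1).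
have cx1 := convection_x_le V1 hN hQx wy0 hK1.
have cx2 := convection_x_le V2 hN hQx wy0 hK1.
have cy1 := convection_y_le V1 hM hQy wx0 hK2.
have cy2 := convection_y_le V2 hM hQy wx0 hK2.
have inflow1 := inflow_pen_le V1 hN hM wx0 wy0 hinf.
have inflow2 := inflow_pen_le V2 hN hM wx0 wy0 hinf.
have visc := viscous_pen_le V1 V2 (dX Dx V2 - dY Dy V1)
  (Pdiag_gt0 hN hQx.1) (Pdiag_gt0 hM hQy.1)
  (rowpen_bpen_le (m := M) hN hp hpx hL hR) (colpen_bpen_le (n := N) hM hp hpy hD hU).
have pen V : dot V (B V) = pen_form (Pdiag px) (Pdiag py) sL' sR' sD' sU' V
    + eps * pen_form (Pdiag px) (Pdiag py) (rowpen N M 0 sL'') (rowpen N M N.-1 sR'')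
              (colpen N M 0 sD'') (colpen N M M.-1 sU'') V.
  by rewrite wdot_Bop ?pen_formDZ //; [exact: hQx.1 | exact: hQy.1].
rewrite /rhs1 /rhs2 !wdot_rhs !pen.
have := ler_wpM2l (ltW he) visc.
move: (wdot_curl2 V1 V2); cbv zeta => /(congr1 ( *%R eps)).
lra.
Qed.

End EnergyRate.

Section EnergyEvolution.
Variable R : realType.

Lemma is_derive_expR_scale (c x : R) :
  is_derive x 1 (fun s : R => expR (c * s)) (expR (c * x) * c).
Proof.
have lin : is_derive x 1 (fun s : R => c * s) c.
  by have := @is_deriveZ R R^o R^o id c x 1 1 (is_derive_id _ _); rewrite /GRing.scale /= mulr1.
exact: is_derive1_comp.
Qed.

Lemma gronwall_exp (E dE : R -> R) (c : R) :
  {within `[0, +oo[, continuous E} ->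
  (forall t : R, 0 < t -> is_derive t 1 E (dE t)) ->
  (forall t : R, 0 < t -> dE t <= c * E t) ->
  forall t : R, 0 <= t -> E t <= expR (c * t) * E 0.
Proof.
move=> cE dEt hle t t0.
pose g (s : R) := expR (- c * s) * E s.
have dg (s : R) : 0 < s -> is_derive s 1 g (expR (- c * s) * (dE s - c * E s)).
  move=> s0; have := @is_deriveM R R^o _ _ s 1 _ _ (is_derive_expR_scale (- c) s) (dEt s s0).
  have -> : expR (- c * s) * (dE s - c * E s)
    = expR (- c * s) * dE s + E s * (expR (- c * s) * - c) by ring.
  exact.
have cg : {within `[0, t], continuous g}.
  have sub : `[0, t] `<=` `[0, +oo[ by move=> s; rewrite /= !in_itv /= => /andP[->].
  move=> x; apply: (@continuousM R (subspace `[0, t]) _ _ x); last first.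
    exact: (continuous_subspaceW sub cE).
  apply: continuous_subspaceT => y.
  exact/differentiable_continuous/derivable1_diffP/(is_derive_expR_scale (- c) y).(ex_derive).
have : g t <= g 0.
  apply: (ler0_derive1_le_cc _ _ cg); rewrite ?in_itv /= ?lexx ?t0 //.
  - by move=> s; rewrite in_itv /= => /andP[s0 _]; exact: (dg s s0).(ex_derive).
  - move=> s; rewrite in_itv /= => /andP[s0 _].
    rewrite derive1E (dg s s0).(derive_val) pmulr_rle0 ?expR_gt0 // subr_le0.
    exact: hle.
rewrite /g mulr0 expR0 mul1r => /(ler_wpM2l (ltW (expR_gt0 (c * t)))).
by rewrite mulrA -expRD mulNr addrN expR0 mul1r.
Qed.

Definition mxderive n m (V : R -> 'M[R]_(n, m)) (t : R) : 'M[R]_(n, m) :=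
  \matrix_(i, j) derive1 (fun s => V s i j) t.

Lemma is_derive_wdot n m (wx : 'I_n -> R) (wy : 'I_m -> R) (V : R -> 'M[R]_(n, m)) (t : R) :
  (forall i j, derivable (fun s => V s i j) t 1) ->
  is_derive t 1 (fun s => wdot wx wy (V s) (V s)) (2 * wdot wx wy (V t) (mxderive V t)).
Proof.
move=> dV; rewrite /wdot mulr_sumr.
under eq_bigr do rewrite mulr_sumr.
have sumE k (F : 'I_k -> R -> R) : (fun s => \sum_i F i s) = \sum_i F i by rewrite fct_sumE.
rewrite sumE; apply: is_derive_sum => i; rewrite sumE; apply: is_derive_sum => j.
have -> : (fun s => wx i * wy j * V s i j * V s i j)
    = (wx i * wy j) *: ((fun s => V s i j) * (fun s => V s i j)).
  by apply/funext => s; rewrite /= -mulrA.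
apply: is_derive_eq.
  exact: is_deriveZ (is_deriveM (derivableP (dV i j)) (derivableP (dV i j))).
by rewrite /GRing.scale /= mxE derive1E; ring.
Qed.

Lemma continuous_wdot (A : set R) n m (wx : 'I_n -> R) (wy : 'I_m -> R) (V : R -> 'M[R]_(n, m)) :
  (forall i j, {within A, continuous (fun s => V s i j)}) ->
  {within A, continuous (fun s => wdot wx wy (V s) (V s))}.
Proof.
move=> cV x.
have cont_sum k (F : 'I_k -> subspace A -> R) :
    (forall i, {for x, continuous (F i)}) -> {for x, continuous (fun s => \sum_i F i s)}.
  move=> cF; rewrite -fct_sumE; elim/big_ind: _ => //; first exact: cst_continuous.
  by move=> f g cf cg; apply: continuousD.
apply: (cont_sum) => i; apply: (cont_sum) => j.
apply: (@continuousM R (subspace A)); last exact: cV.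
apply: (@continuousM R (subspace A)); last exact: cV.
exact: cst_continuous.
Qed.

Section Energy.
Variables (n m : nat) (px : 'I_n -> R) (py : 'I_m -> R).

Lemma energyE (V1 V2 : 'M[R]_(n, m)) : energy (Pmat px) (Pmat py) V1 V2
  = wdot (Pdiag px) (Pdiag py) V1 V1 + wdot (Pdiag px) (Pdiag py) V2 V2.
Proof. by rewrite /energy !ipP_wdot. Qed.

Lemma energy_fctE (V1 V2 : R -> 'M[R]_(n, m)) :
  (fun s => energy (Pmat px) (Pmat py) (V1 s) (V2 s))
  = (fun s => wdot (Pdiag px) (Pdiag py) (V1 s) (V1 s)
              + wdot (Pdiag px) (Pdiag py) (V2 s) (V2 s)).
Proof. by apply/funext => s; rewrite energyE. Qed.

Lemma is_derive_energy (V1 V2 : R -> 'M[R]_(n, m)) (t : R) :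
  (forall i j, derivable (fun s => V1 s i j) t 1) ->
  (forall i j, derivable (fun s => V2 s i j) t 1) ->
  is_derive t 1 (fun s => energy (Pmat px) (Pmat py) (V1 s) (V2 s))
    (2 * (wdot (Pdiag px) (Pdiag py) (V1 t) (mxderive V1 t)
          + wdot (Pdiag px) (Pdiag py) (V2 t) (mxderive V2 t))).
Proof.
move=> d1 d2; rewrite energy_fctE mulrDr.
exact: is_deriveD (is_derive_wdot _ _ d1) (is_derive_wdot _ _ d2).
Qed.

Lemma continuous_energy (A : set R) (V1 V2 : R -> 'M[R]_(n, m)) :
  (forall i j, {within A, continuous (fun s => V1 s i j)}) ->
  (forall i j, {within A, continuous (fun s => V2 s i j)}) ->
  {within A, continuous (fun s => energy (Pmat px) (Pmat py) (V1 s) (V2 s))}.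
Proof.
move=> c1 c2 x; rewrite energy_fctE.
have h1 := continuous_wdot (wx := Pdiag px) (wy := Pdiag py) c1.
have h2 := continuous_wdot (wx := Pdiag px) (wy := Pdiag py) c2.
exact: (@continuousD R R^o (subspace A) _ _ x (h1 x) (h2 x)).
Qed.

End Energy.

End EnergyEvolution.

Section GridRestriction.
Variable R : realType.

Lemma bounded_on_unit_square (g : R -> R -> R) :
  continuous (fun q : R * R => g q.1 q.2) ->
  exists K, forall x y, 0 <= x <= 1 -> 0 <= y <= 1 -> `|g x y| <= K.
Proof.
move=> hg; set A := `[(0 : R), 1] `*` `[(0 : R), 1].
have cA : compact A by apply: compact_setX; apply: segment_compact.
have A0 : A !=set0 by exists (0, 0); split; rewrite /= in_itv /= lexx ler01.
have cf : {within A, continuous (fun q : R * R => `|g q.1 q.2|)}.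
  apply: continuous_subspaceT => q.
  exact: continuous_comp (hg q) (@norm_continuous _ R^o _).
have [c _ hc] := compact_EVT_max A0 cA cf.
exists `|g c.1 c.2| => x y hx hy.
by apply: (hc (x, y)); rewrite inE; split; rewrite /= in_itv.
Qed.

Lemma supnorm01_le (f : R -> R) K :
  (forall x, 0 <= x <= 1 -> `|f x| <= K) -> 0 <= supnorm01 f <= K.
Proof.
move=> hK; set E := [set `|f x| | x in `[(0 : R), 1]].
have E0 : E `|f 0| by exists 0 => //; rewrite /= in_itv /= lexx ler01.
have ub : ubound E K by move=> _ [x hx <-]; apply: hK; move: hx; rewrite /= in_itv.
apply/andP; split; last by apply: ge_sup => //; exists `|f 0|.
by apply: le_trans (normr_ge0 (f 0)) (ub_le_sup _ E0); exists K.
Qed.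

Lemma smooth2_slice_x (f : R -> R -> R) y : smooth2 f -> smooth1 (fun x => f x y).
Proof.
move=> hf k x.
have -> : derive1n k (fun x => f x y) = (fun x => pds (nseq k true) f x y).
  by elim: k => [//|k IH]; rewrite derive1nS IH.
exact: ((hf (nseq k true)).1 x y).1.
Qed.

Lemma smooth2_slice_y (f : R -> R -> R) x : smooth2 f -> smooth1 (f x).
Proof.
move=> hf k y.
have -> : derive1n k (f x) = pds (nseq k false) f x.
  by elim: k => [//|k IH]; rewrite derive1nS IH.
exact: ((hf (nseq k false)).1 x y).2.
Qed.

Lemma gpt_itv n (i : 'I_n) : 0 <= (gpt i : R) <= 1.
Proof.
rewrite /gpt /gstep mul1r mulr_ge0 ?invr_ge0 //=.
case: n i => [[] //|[|n] i]; first by rewrite (ord1 i) mul0r ler01.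
by rewrite ler_pdivrMr ?ltr0n // mul1r ler_nat -ltnS.
Qed.

Lemma gpt_first n (i : 'I_n) : (i : nat) == 0%N -> gpt i = 0 :> R.
Proof. by move=> /eqP hi; rewrite /gpt hi mul0r. Qed.

Lemma gpt_last n (i : 'I_n) : (2 <= n)%N -> (i : nat) == n.-1 -> gpt i = 1 :> R.
Proof.
move=> hn /eqP hi; rewrite /gpt hi /gstep mul1r divff // pnatr_eq0.
by case: n i hn hi => [|[]].
Qed.

Lemma col_grid2 N M (u : R -> R -> R) (j : 'I_M) :
  col j (grid2 N M u) = grid1 N (fun x => u x (gpt j)).
Proof. by apply/matrixP => i k; rewrite !mxE. Qed.

Lemma col_grid2_tr N M (u : R -> R -> R) (i : 'I_N) :
  col i (grid2 N M u)^T = grid1 M (u (gpt i)).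
Proof. by apply/matrixP => j k; rewrite !mxE. Qed.

Lemma commutator_le_grid1 C0 n (P D : 'M[R]_n) (ub : R -> R) K :
  commutator_bound C0 P D -> smooth1 ub ->
  (forall x, 0 <= x <= 1 -> `|derive1 ub x| <= K) ->
  commutator_le (`|C0| * K) P D (grid1 n ub).
Proof.
move=> hC hub hK w; apply: le_trans (hC ub w hub) _.
have /andP[s0 s1] := supnorm01_le hK.
apply: ler_wpM2r; first exact: sqrtr_ge0.
exact: le_trans (ler_wpM2r s0 (ler_norm C0)) (ler_wpM2l (normr_ge0 C0) s1).
Qed.

Lemma inflow_penalty_grid2 N M (u1 u2 : R -> R -> R) (sL sR sD sU : 'M[R]_(N, M)) :
  (2 <= N)%N -> (2 <= M)%N ->
  (forall (i : 'I_N) (j : 'I_M), if (i : nat) == N.-1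
     then sR i j <= Num.min (u1 1 (gpt j)) 0 / 2 else sR i j == 0) ->
  (forall (i : 'I_N) (j : 'I_M), if (i : nat) == 0%N
     then sL i j <= - (Num.max (u1 0 (gpt j)) 0 / 2) else sL i j == 0) ->
  (forall (i : 'I_N) (j : 'I_M), if (j : nat) == M.-1
     then sU i j <= Num.min (u2 (gpt i) 1) 0 / 2 else sU i j == 0) ->
  (forall (i : 'I_N) (j : 'I_M), if (j : nat) == 0%N
     then sD i j <= - (Num.max (u2 (gpt i) 0) 0 / 2) else sD i j == 0) ->
  inflow_penalty (grid2 N M u1) (grid2 N M u2) sL sR sD sU.
Proof.
move=> hN hM hR hL hU hD; split=> i j h.
- by move: (hR i j); rewrite h mxE (gpt_last hN h).
- by move: (hL i j); rewrite h mxE (gpt_first h).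
- by move: (hU i j); rewrite h mxE (gpt_last hM h).
- by move: (hD i j); rewrite h mxE (gpt_first h).
Qed.

End GridRestriction.

Arguments gpt_itv {R n} i.

Theorem theorem3p4 (R : realType) (eps : R) (u1 u2 : R -> R -> R) (C0 : R) :
  0 < eps -> smooth2 u1 -> smooth2 u2 ->
  exists c : R -> R,
  forall (N M : nat) (px : 'I_N -> R) (Qx : 'M[R]_N) (py : 'I_M -> R) (Qy : 'M[R]_M)
    (p : R) (sL' sR' sD' sU' : 'M[R]_(N, M)) (sL'' sR'' sD'' sU'' : R)
    (V1 V2 : R -> 'M[R]_(N, M)),
  let Px := Pmat px in let Py := Pmat py in
  let Dx := Dmat px Qx in let Dy := Dmat py Qy in
  let U1 := grid2 N M u1 in let U2 := grid2 N M u2 in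
  let SL := sL' + eps *: rowpen N M 0 sL'' in
  let SR := sR' + eps *: rowpen N M N.-1 sR'' in
  let SD := sD' + eps *: colpen N M 0 sD'' in
  let SU := sU' + eps *: colpen N M M.-1 sU'' in
  let B := Bop Px Py SL SR SD SU in
  (2 <= N)%N -> (2 <= M)%N ->
  SBP px Qx -> SBP py Qy ->
  (forall i : 'I_N, ((i : nat) == 0%N) || ((i : nat) == N.-1) -> px i = p) ->
  (forall j : 'I_M, ((j : nat) == 0%N) || ((j : nat) == M.-1) -> py j = p) ->
  commutator_bound C0 Px Dx -> commutator_bound C0 Py Dy ->
  (forall (i : 'I_N) (j : 'I_M),
     if (i : nat) == N.-1 then sR' i j <= Num.min (u1 1 (gpt j)) 0 / 2
     else sR' i j == 0) ->
  (forall (i : 'I_N) (j : 'I_M),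
     if (i : nat) == 0%N then sL' i j <= - (Num.max (u1 0 (gpt j)) 0 / 2)
     else sL' i j == 0) ->
  (forall (i : 'I_N) (j : 'I_M),
     if (j : nat) == M.-1 then sU' i j <= Num.min (u2 (gpt i) 1) 0 / 2
     else sU' i j == 0) ->
  (forall (i : 'I_N) (j : 'I_M),
     if (j : nat) == 0%N then sD' i j <= - (Num.max (u2 (gpt i) 0) 0 / 2)
     else sD' i j == 0) ->
  sR'' <= - (1 / (2 * p * gstep N)) ->
  sL'' <= - (1 / (2 * p * gstep N)) ->
  sU'' <= - (1 / (2 * p * gstep M)) ->
  sD'' <= - (1 / (2 * p * gstep M)) ->
  (forall (i : 'I_N) (j : 'I_M),
     {within `[0%R, +oo[, continuous (fun s => V1 s i j)} /\
     {within `[0%R, +oo[, continuous (fun s => V2 s i j)}) ->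
  (forall t : R, 0 < t -> forall (i : 'I_N) (j : 'I_M),
     derivable (fun s => V1 s i j) t 1 /\
     derivable (fun s => V2 s i j) t 1 /\
     derive1 (fun s => V1 s i j) t = rhs1 eps Dx Dy U1 U2 B (V1 t) (V2 t) i j /\
     derive1 (fun s => V2 s i j) t = rhs2 eps Dx Dy U1 U2 B (V1 t) (V2 t) i j) ->
  forall t : R, 0 <= t ->
    energy Px Py (V1 t) (V2 t)
      <= expR (c (Num.max (Num.max (mxmaxabs (dX Dx U1)) (mxmaxabs (dY Dy U1)))
                          (Num.max (mxmaxabs (dX Dx U2)) (mxmaxabs (dY Dy U2)))) * t)
         * energy Px Py (V1 0) (V2 0).
Proof.
move=> he hu1 hu2.
have [Kx hKx] := bounded_on_unit_square (hu1 [:: true]).2.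
have [Ky hKy] := bounded_on_unit_square (hu2 [:: false]).2.
exists (fun k => `|C0| * (Kx + Ky) + 4 * k).
move=> N M px Qx py Qy p sL' sR' sD' sU' sL'' sR'' sD'' sU'' V1 V2 Px Py Dx Dy U1 U2
  SL SR SD SU B hN hM hQx hQy hpx hpy hCx hCy hR hL hU hD hR2 hL2 hU2 hD2 hcont hder.
have hK1 j : commutator_le (`|C0| * Kx) Px Dx (col j U1).
  rewrite col_grid2; apply: (commutator_le_grid1 hCx (smooth2_slice_x hu1)) => x hx.
  exact: hKx x _ hx (gpt_itv j).
have hK2 i : commutator_le (`|C0| * Ky) Py Dy (col i U2^T).
  rewrite col_grid2_tr; apply: (commutator_le_grid1 hCy (smooth2_slice_y hu2)) => y hy.
  exact: hKy _ y (gpt_itv i) hy.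
apply: (gronwall_exp _ (fun t t0 => is_derive_energy px py
  (fun i j => (hder t t0 i j).1) (fun i j => (hder t t0 i j).2.1))).
  by apply: continuous_energy => i j; case: (hcont i j).
move=> t t0; rewrite energyE.
have -> : mxderive V1 t = rhs1 eps Dx Dy U1 U2 B (V1 t) (V2 t).
  by apply/matrixP => i j; rewrite mxE; case: (hder t t0 i j) => _ [_ []].
have -> : mxderive V2 t = rhs2 eps Dx Dy U1 U2 B (V1 t) (V2 t).
  by apply/matrixP => i j; rewrite mxE; case: (hder t t0 i j) => _ [_ []].
have := energy_rate_le hN hM hQx hQy (V1 t) (V2 t) he hpx hpy hK1 hK2
  (inflow_penalty_grid2 hN hM hR hL hU hD) hR2 hL2 hU2 hD2.
lra.
Qed.
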